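(* If the alphabet $\mathcal{A}\subset\mathbb{N}$ contains $1$ and $2$, then the semigroup $\Gamma_{\mathcal{A}}$ has everywhere strong approximation.
   Context: For $a\in\mathbb{N}$ let $\gamma_a=\begin{pmatrix}0&1\\1&a\end{pmatrix}$. $\Gamma_{\mathcal{A}}\subset\mathrm{SL}_2(\mathbb{Z})$ is the semigroup generated by the products $\gamma_a\gamma_{a'}$, $a,a'\in\mathcal{A}$. $\Gamma_{\mathcal{A}}$ has everywhere strong approximation if for every $q\in\mathbb{N}$ the reduction of $\Gamma_{\mathcal{A}}$ modulo $q$ equals $\mathrm{SL}_2(\mathbb{Z}/q\mathbb{Z})$. *)

From mathcomp Require Import all_boot all_order all_algebra.
Set Implicit Arguments. Unset Strict Implicit. Unset Printing Implicit Defensive.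
Import GRing.Theory Num.Theory.
Local Open Scope ring_scope.

Definition gamma (a : nat) : 'M[int]_2 :=
  \matrix_(i < 2, j < 2)
    if (i == 0 :> nat) && (j == 0 :> nat) then 0
    else if (i == 1 :> nat) && (j == 1 :> nat) then (a%:Z)
    else 1.

Inductive in_GammaA (A : nat -> Prop) : 'M[int]_2 -> Prop :=
| GammaA_gen a a' : A a -> A a' -> in_GammaA A (gamma a *m gamma a')
| GammaA_mul g h : in_GammaA A g -> in_GammaA A h -> in_GammaA A (g *m h).

Definition red_mod (q : nat) (g : 'M[int]_2) : 'M['Z_q]_2 :=
  map_mx (fun z : int => z%:~R) g.

(* Everywhere strong approximation: for every modulus q, the reduction of
   Gamma_A mod q is exactly SL_2(Z/qZ).  (q = 1 is trivial and 'Z_1 is not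
   Z/1Z in MathComp, so it is excluded.) *)
Definition everywhere_strong_approx (A : nat -> Prop) : Prop :=
  forall q : nat, (1 < q)%N ->
    forall M : 'M['Z_q]_2,
      (\det M = 1) <-> (exists g, in_GammaA A g /\ red_mod q g = M).

From mathcomp Require Import all_boot all_order all_algebra all_fingroup.
From mathcomp Require Import ring.
Set Implicit Arguments. Unset Strict Implicit. Unset Printing Implicit Defensive.
Import GRing.Theory.
Local Open Scope ring_scope.

(* Every product gamma_a gamma_a' has determinant (-1)(-1) = 1.  Conversely,
   the reduction x of gamma_1 gamma_1 = [[1,1],[1,2]] modulo q has finite
   order, so x^-1 is a positive power of x and lies in the image of Gamma_A;
   hence so do x^-1 gamma_1 gamma_2 = [[1,1],[0,1]] and
   gamma_2 gamma_1 x^-1 = [[1,0],[1,1]].  These two transvections generate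
   SL_2(Z/qZ) as a semigroup: their positive powers are all transvections,
   and the Euclidean algorithm on representatives in [0, q) of the first
   column brings any matrix of determinant 1 to upper triangular form. *)

Section Matrix2.
Variable R : comNzRingType.

Definition mx2 (a b c d : R) : 'M[R]_2 :=
  \matrix_(i, j) if i == 0 then if j == 0 then a else b else if j == 0 then c else d.

Lemma mx2_eta (M : 'M[R]_2) : M = mx2 (M 0 0) (M 0 1) (M 1 0) (M 1 1).
Proof.
apply/matrixP=> -[[|[|i]] //= hi] [[|[|j]] //= hj];
  by rewrite !mxE /=; congr (M _ _); apply: val_inj.
Qed.

Lemma mulmx2 a b c d a' b' c' d' :
  mx2 a b c d *m mx2 a' b' c' d' =
  mx2 (a * a' + b * c') (a * b' + b * d') (c * a' + d * c') (c * b' + d * d').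
Proof.
apply/matrixP=> i j; rewrite !mxE !big_ord_recl big_ord0 addr0 !mxE.
by case: i => -[|[|]] //= _; case: j => -[|[|]].
Qed.

Lemma det_mx2 a b c d : \det (mx2 a b c d) = a * d - b * c.
Proof.
rewrite (expand_det_row _ 0) !big_ord_recl big_ord0 /cofactor !det_mx11 !mxE /=.
by rewrite addr0 expr0 expr1 mul1r mulN1r mulrN.
Qed.

End Matrix2.

Lemma map_mx2 (R S : comNzRingType) (f : R -> S) a b c d :
  map_mx f (mx2 a b c d) = mx2 (f a) (f b) (f c) (f d).
Proof. by apply/matrixP=> i j; rewrite !mxE; case: (i == 0); case: (j == 0). Qed.

Section Transvections.
Variable R : comNzRingType.

Definition transvU (t : R) := mx2 1 t 0 1.
Definition transvL (t : R) := mx2 1 0 t 1.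

Lemma transvUD s t : transvU s *m transvU t = transvU (s + t).
Proof. by rewrite mulmx2; congr mx2; ring. Qed.

Lemma transvLD s t : transvL s *m transvL t = transvL (s + t).
Proof. by rewrite mulmx2; congr mx2; ring. Qed.

Lemma transvU0 : transvU 0 = 1.
Proof. by apply/matrixP=> -[[|[|i]] //= hi] [[|[|j]] //= hj]; rewrite !mxE. Qed.

Lemma transvL0 : transvL 0 = 1.
Proof. by apply/matrixP=> -[[|[|i]] //= hi] [[|[|j]] //= hj]; rewrite !mxE. Qed.

Lemma det_transvU t : \det (transvU t) = 1.
Proof. by rewrite det_mx2 mulr1 mulr0 subr0. Qed.

Lemma det_transvL t : \det (transvL t) = 1.
Proof. by rewrite det_mx2 mulr1 mul0r subr0. Qed.

Lemma transvU_mul_col t (M : 'M[R]_2) :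
  (transvU t *m M) 0 0 = M 0 0 + t * M 1 0 /\ (transvU t *m M) 1 0 = M 1 0.
Proof. by rewrite [M]mx2_eta mulmx2 !mxE /=; split; ring. Qed.

Lemma transvL_mul_col t (M : 'M[R]_2) :
  (transvL t *m M) 0 0 = M 0 0 /\ (transvL t *m M) 1 0 = t * M 0 0 + M 1 0.
Proof. by rewrite [M]mx2_eta mulmx2 !mxE /=; split; ring. Qed.

Section TransvClosed.
Variable P : 'M[R]_2 -> Prop.
Hypothesis PM : forall M N, P M -> P N -> P (M *m N).
Hypothesis PU : forall t, P (transvU t).
Hypothesis PL : forall t, P (transvL t).

Lemma transvU_cancel t (M : 'M[R]_2) : P (transvU t *m M) -> P M.
Proof.
by move=> PtM; have := PM (PU (- t)) PtM; rewrite mulmxA transvUD addNr transvU0 mul1mx.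
Qed.

Lemma transvL_cancel t (M : 'M[R]_2) : P (transvL t *m M) -> P M.
Proof.
by move=> PtM; have := PM (PL (- t)) PtM; rewrite mulmxA transvLD addNr transvL0 mul1mx.
Qed.

Lemma transv_closed_triangular (M : 'M[R]_2) : M 1 0 = 0 -> \det M = 1 -> P M.
Proof.
move=> c0; rewrite [M]mx2_eta c0 det_mx2 mulr0 subr0.
set a := M 0 0; set b := M 0 1; set d := M 1 1 => ad1.
apply: (@transvL_cancel d); apply: (@transvU_cancel (1 - a)).
apply: (@transvL_cancel (-1)); rewrite /transvU /transvL !mulmx2.
rewrite (_ : mx2 _ _ _ _ = transvU (b + (1 - a) * (d * b + d))) //.
rewrite /transvU; congr mx2; rewrite ?[d * a]mulrC ?ad1; try ring.
by transitivity (b * (a * d - 1) + a * d); [ring | rewrite ad1 subrr mulr0 add0r].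
Qed.

End TransvClosed.
End Transvections.

Section SL2Zp.
Variable q : nat.
Hypothesis q_gt1 : (1 < q)%N.
Local Notation Zq := 'Z_q.

Lemma Zp_val_lt (x : Zq) : (val x < q)%N.
Proof. by have := ltn_ord x; rewrite [X in (_ < X)%N -> _]Zp_cast. Qed.

Lemma Zp_val_nat n : (n < q)%N -> val (n%:R : Zq) = n.
Proof. by move=> ltnq; have := val_Zp_nat q_gt1 n; rewrite modn_small. Qed.

Lemma Zp_val_sub_divnM (x y : Zq) :
  val (x - (val x %/ val y)%:R * y) = (val x %% val y)%N.
Proof.
set a := val x; set c := val y.
have [-> ->] : x = a%:R /\ y = c%:R by rewrite !natr_Zp.
rewrite {1}(divn_eq a c) natrD natrM addrC addKr Zp_val_nat //.
exact: leq_ltn_trans (leq_mod _ _) (Zp_val_lt x).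
Qed.

Lemma Zp_natS (x : Zq) : exists n, x = n.+1%:R.
Proof.
exists (val x + q.-1)%N; rewrite -addnS prednK 1?ltnW // natrD.
by rewrite -(Zp_nat_mod q_gt1 q) modnn addr0 natr_Zp.
Qed.

Section Generation.
Variable P : 'M[Zq]_2 -> Prop.
Hypothesis PM : forall M N, P M -> P N -> P (M *m N).
Hypothesis PU : forall t, P (transvU t).
Hypothesis PL : forall t, P (transvL t).

Lemma transv_closed_SL2_Zp (M : 'M[Zq]_2) : \det M = 1 -> P M.
Proof.
have [n] := ubnP (val (M 0 0) + val (M 1 0)); elim: n M => // n IH M.
rewrite ltnS => le_n detM.
have [c0|c_gt0] := posnP (val (M 1 0)).
  by apply: (transv_closed_triangular PM PU PL) => //; apply: val_inj.
have [a0|a_gt0] := posnP (val (M 0 0)).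
  apply: (transvU_cancel PM PU (t := 1)); apply: (transvL_cancel PM PL (t := -1)).
  apply: (transv_closed_triangular PM PU PL); last first.
    by rewrite !det_mulmx det_transvU det_transvL detM !mul1r.
  have [_ ->] := transvL_mul_col (-1) (transvU 1 *m M).
  have [-> ->] := transvU_mul_col 1 M.
  by rewrite (_ : M 0 0 = 0) ?add0r ?mul1r ?mulN1r ?addNr //; apply: val_inj.
have [le_ca|lt_ac] := leqP (val (M 1 0)) (val (M 0 0)).
  apply: (transvU_cancel PM PU (t := - (val (M 0 0) %/ val (M 1 0))%:R)).
  apply: IH; last by rewrite det_mulmx det_transvU detM mul1r.
  have [-> ->] := transvU_mul_col (- (val (M 0 0) %/ val (M 1 0))%:R) M.
  rewrite mulNr Zp_val_sub_divnM.
  by apply: leq_trans le_n; rewrite ltn_add2r (leq_trans (ltn_pmod _ c_gt0)).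
apply: (transvL_cancel PM PL (t := - (val (M 1 0) %/ val (M 0 0))%:R)).
apply: IH; last by rewrite det_mulmx det_transvL detM mul1r.
have [-> ->] := transvL_mul_col (- (val (M 1 0) %/ val (M 0 0))%:R) M.
rewrite mulNr addrC Zp_val_sub_divnM.
by apply: leq_trans le_n; rewrite ltn_add2l (ltn_trans (ltn_pmod _ a_gt0)).
Qed.

End Generation.

Lemma SL2_Zp_generated (P : 'M[Zq]_2 -> Prop) :
    (forall M N, P M -> P N -> P (M *m N)) -> P (transvU 1) -> P (transvL 1) ->
  forall M, \det M = 1 -> P M.
Proof.
move=> PM PU1 PL1; apply: transv_closed_SL2_Zp => // t; have [n ->] := Zp_natS t.
- by elim: n => [|n IHn] //; rewrite -nat1r -transvUD; apply: PM.
- by elim: n => [|n IHn] //; rewrite -nat1r -transvLD; apply: PM.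
Qed.

End SL2Zp.

Lemma unit_inv_expS (R : finUnitRingType) (x : R) :
  x \is a GRing.unit -> exists n, x^-1 = x ^+ n.+1.
Proof.
move=> xU; set u := FinRing.unit R xU.
have [m um] : exists m, #[u]%g = m.+1 by exists #[u]%g.-1; rewrite prednK ?order_gt0.
have xm : x ^+ m.+1 = 1 by rewrite -um -[x]/(val u) -FinRing.val_unitX expg_order.
exists (m + m)%N; apply: (mulIr xU); rewrite mulVr // -exprSr.
by rewrite -addnS -addSn exprD xm mulr1.
Qed.

Lemma gammaE a : gamma a = mx2 0 1 1 a%:Z.
Proof. by apply/matrixP=> -[[|[|i]] //= hi] [[|[|j]] //= hj]; rewrite !mxE. Qed.

Lemma gammaM a b : gamma a *m gamma b = mx2 1 b%:Z a%:Z (1 + a%:Z * b%:Z).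
Proof. by rewrite !gammaE mulmx2; congr mx2; ring. Qed.

Lemma det_GammaA A g : in_GammaA A g -> \det g = 1.
Proof.
elim=> [a b _ _ | g1 g2 _ detg1 _ detg2]; last by rewrite det_mulmx detg1 detg2 mulr1.
by rewrite gammaM det_mx2; ring.
Qed.

Lemma red_modM q g h : red_mod q (g *m h) = red_mod q g *m red_mod q h.
Proof. exact: map_mxM. Qed.

Lemma det_red_mod q g : \det (red_mod q g) = (\det g)%:~R.
Proof. exact: det_map_mx. Qed.

Lemma red_mod_transvU q t : red_mod q (transvU t) = transvU t%:~R.
Proof. by rewrite /red_mod /transvU map_mx2. Qed.

Lemma red_mod_transvL q t : red_mod q (transvL t) = transvL t%:~R.
Proof. by rewrite /red_mod /transvL map_mx2. Qed.

Lemma gamma12 : gamma 1 *m gamma 2 = (gamma 1 *m gamma 1) *m transvU 1.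
Proof. by rewrite !gammaM mulmx2; congr mx2; ring. Qed.

Lemma gamma21 : gamma 2 *m gamma 1 = transvL 1 *m (gamma 1 *m gamma 1).
Proof. by rewrite !gammaM mulmx2; congr mx2; ring. Qed.

Theorem lemmaB2 (A : nat -> Prop) :
  (forall a, A a -> (0 < a)%N) -> A 1%N -> A 2%N ->
  everywhere_strong_approx A.
Proof.
move=> _ A1 A2 q q_gt1 M; split; last first.
  by case=> g [/det_GammaA detg <-]; rewrite det_red_mod detg.
pose P N := exists g, in_GammaA A g /\ red_mod q g = N.
have PM N1 N2 : P N1 -> P N2 -> P (N1 *m N2).
  move=> [g1 [Gg1 <-]] [g2 [Gg2 <-]]; exists (g1 *m g2).
  by rewrite red_modM; split=> //; apply: GammaA_mul.
have Pgamma a b : A a -> A b -> P (red_mod q (gamma a *m gamma b)).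
  by move=> Aa Ab; exists (gamma a *m gamma b); split=> //; apply: GammaA_gen.
set x := red_mod q (gamma 1 *m gamma 1).
have xU : x \is a GRing.unit.
  by rewrite unitmxE det_red_mod (det_GammaA (GammaA_gen A1 A1)) unitr1.
have [n xV] := unit_inv_expS xU.
have PxV : P x^-1.
  rewrite xV; elim: n {xV} => [|n IHn]; first exact: Pgamma.
  by rewrite exprSr; apply: PM => //; apply: Pgamma.
apply: (SL2_Zp_generated q_gt1 PM).
- rewrite -(mulKr xU (transvU 1)) -!mulmxE.
  rewrite (_ : transvU 1 = red_mod q (transvU 1)); last by rewrite red_mod_transvU.
  rewrite -red_modM -gamma12.
  by apply: PM => //; apply: Pgamma.
- rewrite -(mulrK xU (transvL 1)) -!mulmxE.
  rewrite (_ : transvL 1 = red_mod q (transvL 1)); last by rewrite red_mod_transvL.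
  rewrite -red_modM -gamma21.
  by apply: PM => //; apply: Pgamma.
Qed.
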